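(* Let $K$ be a connected simplicial complex with $d$ vertices $v_1,\ldots,v_d$. Let $0\leq a_1<\cdots<a_d$ be integers such that whenever $a_j-a_i=a_{j'}-a_{i'}$ (for indices $i,j,i',j'\in\{1,\ldots,d\}$) we have $i=j$ or $j=j'$. Let $n>2a_d$ be an integer coprime to all differences $a_j-a_i$ with $j>i$. Let $\widetilde{K}$ be the simplicial complex with vertex set $\mathbb{Z}/n$ whose faces are all sets of the form $\{x+a_{i_1},\ldots,x+a_{i_k}\}$ (addition modulo $n$) where $x\in\mathbb{Z}/n$ and $\{v_{i_1},\ldots,v_{i_k}\}$ is a face of $K$. Then $\widetilde{K}$ is a cluster of $n$ subcomplexes, each isomorphic to $K$.
   Context: A finite simplicial complex $X$ is a cluster of $X_1,\ldots,X_k$ (its parts) if $X_1,\ldots,X_k$ are induced subcomplexes of $X$ with $X=X_1\cup\cdots\cup X_k$ and such that for all $i\neq j$ the intersection $X_i\cap X_j$ is either empty or consists of a single vertex. *)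

From mathcomp Require Import all_boot all_order all_algebra.
Set Implicit Arguments. Unset Strict Implicit. Unset Printing Implicit Defensive.

Section Complexes.
Variable V : finType.

Definition is_complex (X : {set {set V}}) : Prop :=
  set0 \notin X /\
  (forall s t : {set V}, s \in X -> t \subset s -> t != set0 -> t \in X).

Definition is_complex_on (X : {set {set V}}) : Prop :=
  is_complex X /\ (forall v : V, [set v] \in X).

Definition vertices (X : {set {set V}}) : {set V} := \bigcup_(s in X) s.

Definition connected_complex (X : {set {set V}}) : Prop :=
  vertices X != set0 /\
  (forall u v, u \in vertices X -> v \in vertices X ->
     connect (fun x y => [set x; y] \in X) u v).

Definition induced_subcomplex (Y X : {set {set V}}) : Prop :=
  Y \subset X /\ Y = [set s in X | s \subset vertices Y].

Definition is_cluster (k : nat) (X : {set {set V}}) (P : 'I_k -> {set {set V}}) : Prop :=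
  (forall i, induced_subcomplex (P i) X) /\
  X = \bigcup_(i < k) P i /\
  (forall i j, i != j ->
     P i :&: P j = set0 \/ exists v : V, P i :&: P j = [set [set v]]).

Definition iso_complex (W : finType) (K : {set {set W}}) (Y : {set {set V}}) : Prop :=
  exists f : W -> V, injective f /\ f @: [set: W] = vertices Y /\
    (forall s : {set W}, (s \in K) = (f @: s \in Y)).

End Complexes.

Definition tilde_complex (n d : nat) (a : 'I_d -> nat) (K : {set {set 'I_d}})
  : {set {set 'I_n}} :=
  [set F : {set 'I_n} | [exists x : 'I_n, exists s in K,
     F == [set y : 'I_n | [exists i in s, (y : nat) == (x + a i) %% n]]]].

(* Write the modulus as n.+1 and put the x-th copy of K on the vertices
   x + a_i mod n.+1.  Since every a_i is at most M with 2 M < n.+1, the two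
   congruences x + a_i = y + a_k and x + a_j = y + a_l force the exact
   identity a_j - a_i = a_l - a_k, and the hypothesis on the differences of
   the a_i then gives x = y as soon as i <> j.  Hence a face of one copy that
   lies in the vertex set of another copy is a single vertex, which shows at
   once that each copy is an induced subcomplex and that two copies meet in
   at most one vertex. *)

From mathcomp Require Import all_boot all_order all_algebra.
From mathcomp Require Import zify.
Import GRing.Theory.
Set Implicit Arguments. Unset Strict Implicit. Unset Printing Implicit Defensive.

Lemma modn_lt_double (N m : nat) :
  m < 2 * N -> m %% N = if m < N then m else m - N.
Proof.
move=> m_lt; case: ifP => [/modn_small//|m_ge].
have -> : m = (m - N) + N by lia.
by rewrite modnDr modn_small; lia.
Qed.

Lemma addn_mod_diff (N M x y p q r s : nat) :
  x < N -> y < N -> 2 * M < N -> p <= M -> q <= M -> r <= M -> s <= M ->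
  (x + p) %% N = (y + q) %% N -> (x + r) %% N = (y + s) %% N ->
  r + q = p + s.
Proof.
move=> x_lt y_lt M_lt p_le q_le r_le s_le.
by rewrite !modn_lt_double; try lia; do 4 case: ifP; lia.
Qed.

Section ShiftedCopies.

Variables (d n M : nat) (a : 'I_d -> nat) (K : {set {set 'I_d}}).
Hypothesis K_complex : is_complex_on K.
Hypothesis a_inj : injective a.
Hypothesis a_differences : forall i j i' j' : 'I_d,
  ((a j)%:Z - (a i)%:Z = (a j')%:Z - (a i')%:Z)%R -> i = j \/ j = j'.
Hypothesis a_le : forall i, a i <= M.
Hypothesis M_lt : 2 * M < n.+1.

Definition shift (x : 'I_n.+1) (i : 'I_d) : 'I_n.+1 :=
  Ordinal (ltn_pmod (x + a i) (ltn0Sn n)).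

Definition shifted_copy (x : 'I_n.+1) : {set {set 'I_n.+1}} :=
  [set shift x @: s | s : {set 'I_d} in K].

Lemma shift_inj x : injective (shift x).
Proof.
have a_lt i : a i < n.+1 by have := a_le i; lia.
move=> i j /(congr1 val)/eqP /=.
by rewrite eqn_modDl !modn_small // => /eqP/a_inj.
Qed.

Lemma shift_collision x y i j k l :
  i != j -> shift x i = shift y k -> shift x j = shift y l -> x = y.
Proof.
move=> neq_ij /(congr1 val) /= e_ik /(congr1 val) /= e_jl.
have e_diff := addn_mod_diff (ltn_ord x) (ltn_ord y) M_lt
  (a_le i) (a_le k) (a_le j) (a_le l) e_ik e_jl.
have [eq_ij|eq_jl] : i = j \/ j = l by apply: (a_differences (i' := k)); lia.
  by rewrite eq_ij eqxx in neq_ij.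
have a_ki : a k = a i by rewrite -eq_jl in e_diff; lia.
rewrite -a_ki in e_ik; move/eqP: e_ik.
by rewrite eqn_modDr !modn_small // => /eqP/val_inj.
Qed.

Lemma shared_vertex_unique x y i j :
  x != y -> shift x i \in shift y @: setT -> shift x j \in shift y @: setT -> i = j.
Proof.
move=> neq_xy /imsetP [k _ e_ik] /imsetP [l _ e_jl]; apply/eqP.
by apply: contraNT neq_xy => neq_ij; apply/eqP; apply: shift_collision e_ik e_jl.
Qed.

Lemma face_in_other_copy x y s :
  x != y -> s != set0 -> shift x @: s \subset shift y @: setT ->
  exists i, s = [set i].
Proof.
move=> neq_xy /set0Pn [i s_i] sub_s; exists i; apply/setP => j.
rewrite inE; apply/idP/eqP => [s_j|->//].
by apply: shared_vertex_unique neq_xy _ _; apply: (subsetP sub_s); apply: imset_f.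
Qed.

Lemma face_neq0 s : s \in K -> s != set0.
Proof. by case: K_complex => -[K0 _] _; apply: contraTneq => ->. Qed.

Lemma vertices_shifted_copy x : vertices (shifted_copy x) = shift x @: setT.
Proof.
apply/setP => v; apply/bigcupP/imsetP => [[_ /imsetP [s _ ->]]|[i _ ->]].
  by case/imsetP=> i _ ->; exists i.
exists (shift x @: [set i]); last by rewrite imset_set1 set11.
by apply: imset_f; case: K_complex.
Qed.

Lemma tilde_complexE : tilde_complex n.+1 a K = \bigcup_(x < n.+1) shifted_copy x.
Proof.
have shiftE (x : 'I_n.+1) (s : {set 'I_d}) :
    [set y : 'I_n.+1 | [exists i in s, (y : nat) == (x + a i) %% n.+1]]
                  = shift x @: s.
  apply/setP => y; rewrite inE; apply/existsP/imsetP => [[i /andP [s_i /eqP e]]|[i s_i ->]].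
    by exists i => //; apply: val_inj.
  by exists i; rewrite s_i eqxx.
apply/setP => F; rewrite inE; apply/existsP/bigcupP.
  case=> x /existsP [s /andP [K_s /eqP ->]].
  by exists x => //; rewrite shiftE imset_f.
case=> x _ /imsetP [s K_s ->]; exists x; apply/existsP; exists s.
by rewrite K_s shiftE eqxx.
Qed.

Lemma shifted_copy_induced x :
  induced_subcomplex (shifted_copy x) (tilde_complex n.+1 a K).
Proof.
rewrite tilde_complexE; split; first exact: (bigcup_sup x).
apply/setP => F; rewrite inE vertices_shifted_copy.
apply/idP/andP => [copy_F|[/bigcupP [y _ /imsetP [t K_t ->]] sub_t]].
  split; first by apply/bigcupP; exists x.
  by case/imsetP: copy_F => s _ ->; apply: imsetS.
have [<-|neq_yx] := eqVneq y x; first exact: imset_f.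
have [i t_i] := face_in_other_copy neq_yx (face_neq0 K_t) sub_t.
rewrite t_i in sub_t *; rewrite imset_set1 in sub_t *.
have /imsetP [k _ ->] := subsetP sub_t _ (set11 (shift y i)).
by rewrite -imset_set1 imset_f //; case: K_complex.
Qed.

Lemma shifted_copyI x y : x != y ->
  shifted_copy x :&: shifted_copy y = set0 \/
  exists v, shifted_copy x :&: shifted_copy y = [set [set v]].
Proof.
move=> neq_xy.
have vertexI F : F \in shifted_copy x :&: shifted_copy y ->
    exists2 i, F = [set shift x i] & shift x i \in shift y @: setT.
  rewrite inE => /andP [/imsetP [s K_s ->] /imsetP [t _ e_st]].
  have sub_s : shift x @: s \subset shift y @: setT by rewrite e_st imsetS.
  have [i s_i] := face_in_other_copy neq_xy (face_neq0 K_s) sub_s.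
  exists i; first by rewrite s_i imset_set1.
  by apply: (subsetP sub_s); rewrite s_i imset_f ?set11.
have [->|[F F_xy]] := set_0Vmem (shifted_copy x :&: shifted_copy y); first by left.
right; have [i e_F shared_i] := vertexI F F_xy; exists (shift x i).
apply/setP => G; rewrite in_set1; apply/idP/eqP => [G_xy|->]; last by rewrite -e_F.
have [j -> shared_j] := vertexI G G_xy.
by rewrite (shared_vertex_unique neq_xy shared_j shared_i).
Qed.

Lemma shifted_copy_iso x : iso_complex K (shifted_copy x).
Proof.
exists (shift x); split; first exact: shift_inj.
split; first by rewrite vertices_shifted_copy.
move=> s; apply/idP/imsetP => [K_s|[t K_t e_st]]; first by exists s.
by rewrite (imset_inj (@shift_inj x) e_st).
Qed.

End ShiftedCopies.

Theorem proposition3p1 (d : nat) (K : {set {set 'I_d}}) (a : 'I_d -> nat) (n : nat) :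
  is_complex_on K ->
  connected_complex K ->
  (forall i j : 'I_d, (i < j)%N -> (a i < a j)%N) ->
  (forall i j i' j' : 'I_d,
     ((a j)%:Z - (a i)%:Z = (a j')%:Z - (a i')%:Z)%R -> i = j \/ j = j') ->
  (2 * \max_(i < d) a i < n)%N ->
  (forall i j : 'I_d, (i < j)%N -> coprime n (a j - a i)) ->
  exists P : 'I_n -> {set {set 'I_n}},
    is_cluster (tilde_complex n a K) P /\ (forall x : 'I_n, iso_complex K (P x)).
Proof.
move=> K_complex _ a_incr a_differences.
case: n => [|n]; first by rewrite ltn0.
move=> max_lt _.
have a_le i : a i <= \max_(j < d) a j by apply: leq_bigmax.
have a_inj : injective a.
  by move=> i j e_ij; apply/val_inj/eqP; case: ltngtP => // /a_incr; rewrite e_ij ltnn.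
exists (shifted_copy a K); split; last exact: shifted_copy_iso K_complex a_inj a_le max_lt.
split; first exact: shifted_copy_induced K_complex a_differences a_le max_lt.
split; first exact: tilde_complexE.
by move=> x y; apply: (shifted_copyI K_complex a_differences a_le max_lt).
Qed.
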